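(* Let $\lambda$ be a partition of $n$. Denote by $\mathsf{CS}(\lambda)_{[1,n-1]}$ the graph obtained from the crystal skeleton $\mathsf{CS}(\lambda)$ by removing all edges whose label $I$ satisfies $n\in I$. Then there is a graph isomorphism $$\mathsf{CS}(\lambda)_{[1,n-1]}\cong\bigoplus_{\lambda^-}\mathsf{CS}(\lambda^-),$$ where the sum (disjoint union) is over all partitions $\lambda^-$ such that $\lambda/\lambda^-$ is a single box.
   Context: French notation; $\mathsf{SYT}(\lambda)$ standard tableaux; $\mathsf{row}(T)$ reads rows left to right from top row to bottom row; $\mathsf{std}$ replaces the $a_j$ entries $j$, in reading order, by $a_1+\dots+a_{j-1}+1,\dots,a_1+\dots+a_j$. Crystal operator $f_i$: in the subword of letters $i,i+1$ of the reading word, bracket each $i+1$ with an unbracketed $i$ to its right (parenthesis matching); $f_i$ changes the rightmost unbracketed $i$ to $i+1$. For a permutation $\pi$ of $[N]$ and $I=[i,i+2m]\subseteq[N]$, $m\ge1$, $I$ is a Dyck pattern interval of $\pi$ if the RSK insertion tableau of the subword $\pi|_I$ of letters in $I$ has bottom row $i,\dots,i+m$ and top row $i+m+1,\dots,i+2m$; a Dyck pattern interval of $T$ is one of $\mathsf{row}(T)$. The crystal skeleton $\mathsf{CS}(\lambda)$, $|\lambda|=N$, is the directed graph on $\mathsf{SYT}(\lambda)$ with, for each Dyck pattern interval $I=[i,i+2m]$ of $T$, an edge $T\xrightarrow{I}\mathsf{std}(f_i(b))$ labeled $I$, where $b$ is obtained from $T$ by replacing entries $i,\dots,i+m$ by $i$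 and $i+m+1,\dots,i+2m$ by $i+1$. (Equivalently, it is the crystal of semistandard tableaux with each quasi-crystal $\{b:\mathsf{std}(b)=T\}$ contracted to a vertex.) Graph isomorphisms here are of directed edge-labeled graphs. *)

From mathcomp Require Import all_boot.
Set Implicit Arguments. Unset Strict Implicit. Unset Printing Implicit Defensive.

Definition is_part (l : seq nat) : bool := sorted geq l && all (fun x => 0 < x) l.

(* A tableau is a seq of rows; row 0 is the BOTTOM (longest) row (French notation). *)
Definition tableau := seq (seq nat).
Definition shape (T : tableau) : seq nat := map size T.

Definition is_SYT (lam : seq nat) (T : tableau) : Prop :=
  [/\ shape T = lam,
      perm_eq (flatten T) (iota 1 (sumn lam)),
      (forall r, sorted ltn (nth [::] T r)) &
      (forall r c, c < size (nth [::] T r.+1) ->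
         nth 0 (nth [::] T r) c < nth 0 (nth [::] T r.+1) c)].

Definition rowword (T : tableau) : seq nat := flatten (rev T).

Definition of_rowword (sh : seq nat) (w : seq nat) : tableau :=
  rev (reshape (rev sh) w).

(* RSK row insertion (French: the bumped letter goes to the row above). *)
Fixpoint rsk_ins (P : tableau) (x : nat) : tableau :=
  match P with
  | [::] => [:: [:: x]]
  | r :: P' =>
      let k := find (fun y => x < y) r in
      if k == size r then rcons r x :: P'
      else set_nth 0 r k x :: rsk_ins P' (nth 0 r k)
  end.

Definition rsk_P (w : seq nat) : tableau := foldl rsk_ins [::] w.

(* I = [i, i+2m] is a Dyck pattern interval of the word pi (of [N], N = size pi). *)
Definition dyck_interval (pi : seq nat) (i m : nat) : bool :=
  [&& 1 <= m, 1 <= i, i + 2 * m <= size pi &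
      rsk_P [seq x <- pi | i <= x <= i + 2 * m]
        == [:: iota i m.+1; iota (i + m + 1) m]].

(* Position of the rightmost unbracketed letter i in w (letters i+1 are
   bracketed with an unbracketed i to their right, parenthesis matching). *)
Fixpoint last_unbr (i : nat) (w : seq nat) (cnt pos : nat) (acc : option nat)
  : option nat :=
  match w with
  | [::] => acc
  | x :: w' =>
      if x == i.+1 then last_unbr i w' cnt.+1 pos.+1 acc
      else if x == i then
        (if cnt == 0 then last_unbr i w' 0 pos.+1 (Some pos)
         else last_unbr i w' cnt.-1 pos.+1 acc)
      else last_unbr i w' cnt pos.+1 acc
  end.

Definition f_word (i : nat) (w : seq nat) : option (seq nat) :=
  match last_unbr i w 0 0 None with
  | Some p => Some (set_nth 0 w p i.+1)
  | None => None
  end.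

Definition f_tab (i : nat) (b : tableau) : option tableau :=
  match f_word i (rowword b) with
  | Some w => Some (of_rowword (shape b) w)
  | None => None
  end.

(* Standardization: entries j are replaced, in reading order, by
   a_1+..+a_{j-1}+1, ..., a_1+..+a_j. *)
Definition std_word (w : seq nat) : seq nat :=
  [seq count (fun y => y < nth 0 w p) w
       + count (pred1 (nth 0 w p)) (take p w) + 1 | p <- iota 0 (size w)].

Definition std (b : tableau) : tableau := of_rowword (shape b) (std_word (rowword b)).

Definition collapse (i m : nat) (T : tableau) : tableau :=
  map (map (fun x => if i <= x <= i + m then i
                     else if i + m < x <= i + 2 * m then i.+1 else x)) T.

Definition CS_edge (lam : seq nat) (T : tableau) (I : nat * nat) (T' : tableau) : Prop :=
  let: (i, m) := I in
  [/\ is_SYT lam T, is_SYT lam T', dyck_interval (rowword T) i m &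
      exists b', f_tab i (collapse i m T) = Some b' /\ T' = std b'].

Definition one_box_removed (lam mu : seq nat) : Prop :=
  [/\ is_part mu, (sumn mu).+1 = sumn lam, size mu <= size lam &
      forall k, nth 0 mu k <= nth 0 lam k].

From mathcomp Require Import all_boot zify.
Set Implicit Arguments. Unset Strict Implicit. Unset Printing Implicit Defensive.

(* Removing the largest entry n from a standard tableau of shape lam leaves a
   standard tableau of a shape lam^- with lam / lam^- a single box, and the row
   of that box (determined by lam and lam^-) says where n goes back.
   Along an edge labelled I = [i, i+2m] with n outside I, no ingredient of the
   edge touches the letter n of the reading word: the Dyck pattern test only
   sees letters of I, collapsing and f_i only change letters of I, and
   standardization fixes the unique largest letter and commutes with deleting
   it.  So T1 -> T2 is such an edge iff n sits at the same place of both
   reading words (i.e. both deletions have the same shape) and the deletions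
   are joined by the same edge. *)

(** * Crystal operators and standardization on words *)

(* [f_word_rec i w k] is [f_word i w] when [k] letters [i.+1] to the left of
   [w] are still waiting for a letter [i] to bracket with. *)
Fixpoint f_word_rec (i : nat) (w : seq nat) (k : nat) : option (seq nat) :=
  match w with
  | [::] => None
  | x :: w' =>
    if x == i.+1 then omap (cons x) (f_word_rec i w' k.+1)
    else if x == i then
      if k == 0 then
        if f_word_rec i w' 0 is Some v then Some (x :: v) else Some (i.+1 :: w')
      else omap (cons x) (f_word_rec i w' k.-1)
    else omap (cons x) (f_word_rec i w' k)
  end.

Lemma set_nth_size_cat (pre u : seq nat) x y :
  set_nth 0 (pre ++ x :: u) (size pre) y = pre ++ y :: u.
Proof. by elim: pre => //= a pre ->. Qed.

Lemma last_unbr_f_word_rec i u k pre acc :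
  omap (fun p => set_nth 0 (pre ++ u) p i.+1) (last_unbr i u k (size pre) acc) =
  if f_word_rec i u k is Some v then Some (pre ++ v)
  else omap (fun p => set_nth 0 (pre ++ u) p i.+1) acc.
Proof.
elim: u k pre acc => [|x u IH] k pre acc /=; first by rewrite cats0.
have {}IH k' acc' := IH k' (rcons pre x) acc'; rewrite size_rcons cat_rcons in IH.
case: eqP => _; first by rewrite IH; case: f_word_rec => //= v; rewrite cat_rcons.
case: eqP => [xi|_]; last by rewrite IH; case: f_word_rec => //= v; rewrite cat_rcons.
case: eqP => _; rewrite IH; case: f_word_rec => [v|] //=; rewrite ?cat_rcons //.
by rewrite xi set_nth_size_cat.
Qed.

Lemma f_word_recE i u : f_word i u = f_word_rec i u 0.
Proof.
have := last_unbr_f_word_rec i u 0 [::] None; rewrite /f_word /=.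
by case: last_unbr => [p|]; case: f_word_rec => [v|] // [->].
Qed.

Lemma f_word_filter (a : pred nat) i u : a i -> a i.+1 ->
  f_word i (filter a u) = omap (filter a) (f_word i u).
Proof.
move=> ai ai1; rewrite !f_word_recE; elim: u 0 => [|x u IH] k //=.
have [ax|nax] := boolP (a x) => /=.
  case: eqP => _; first by rewrite IH; case: f_word_rec => //= v; rewrite ax.
  case: eqP => [->|_]; last by rewrite IH; case: f_word_rec => //= v; rewrite ax.
  by case: eqP => _; rewrite IH; case: f_word_rec => [v|] /=; rewrite ?ai ?ai1.
have [xi1|xi1] := eqVneq x i.+1; first by rewrite xi1 ai1 in nax.
have [xi|xi] := eqVneq x i; first by rewrite xi ai in nax.
by rewrite IH; case: f_word_rec => //= v; rewrite (negbTE nax).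
Qed.

Lemma f_word_raise i u v : f_word i u = Some v ->
  exists pre post, u = pre ++ i :: post /\ v = pre ++ i.+1 :: post.
Proof.
rewrite f_word_recE; elim: u 0 v => [|x u IH] k v //=.
have cons_case k' : omap (cons x) (f_word_rec i u k') = Some v ->
    exists pre post, x :: u = pre ++ i :: post /\ v = pre ++ i.+1 :: post.
  case E: f_word_rec => [w|] //= [<-].
  by have [pre [post [-> ->]]] := IH _ _ E; exists (x :: pre), post.
case: eqP => _; first exact: cons_case.
case: eqP => [xi|_]; last exact: cons_case.
case: eqP => _; last exact: cons_case.
case E: f_word_rec => [w|] [<-]; last by exists [::], u; rewrite xi.
by have [pre [post [-> ->]]] := IH _ _ E; exists (x :: pre), post.
Qed.

Lemma size_f_word i u w : f_word i u = Some w -> size w = size u.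
Proof. by case/f_word_raise=> [pre [post [-> ->]]]; rewrite !size_cat. Qed.

(* [std_rec w pre s] are the standardized letters of the suffix [s] of
   [w = pre ++ s]. *)
Fixpoint std_rec (w pre s : seq nat) : seq nat :=
  if s is x :: s' then
    (count (fun y => y < x) w + count_mem x pre + 1) :: std_rec w (rcons pre x) s'
  else [::].

Lemma std_wordE w : std_word w = std_rec w [::] w.
Proof.
suff gen s pre : pre ++ s = w -> [seq count (fun y => y < nth 0 w p) w
    + count (pred1 (nth 0 w p)) (take p w) + 1 | p <- iota (size pre) (size s)]
    = std_rec w pre s by exact: (gen w [::]).
elim: s pre => // x s IH pre Ew /=.
by rewrite -IH ?cat_rcons // size_rcons -Ew nth_cat ltnn subnn take_size_cat.
Qed.

Lemma size_std_word w : size (std_word w) = size w.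
Proof. by rewrite size_map size_iota. Qed.

(** * Words with a unique largest letter *)

Definition unique_max (n : nat) (w : seq nat) : bool :=
  [&& size w == n, all (leq^~ n) w & count_mem n w == 1].

Lemma unique_max_le n w x : unique_max n w -> x \in w -> x <= n.
Proof. by case/and3P=> _ /allP le_n _; apply: le_n. Qed.

Lemma count_ltS (w : seq nat) x :
  count (fun y => y < x.+1) w = count (fun y => y < x) w + count_mem x w.
Proof. by elim: w => //= y w ->; rewrite ltnS leq_eqVlt; case: ltngtP => _ /=; lia. Qed.

Section StandardizeMax.

Variables (n : nat) (W : seq nat).
Hypothesis W_max : unique_max n W.

Lemma count_lt_max : count (fun y => y < n) W = n.-1.
Proof.
case/and3P: W_max => /eqP size_W all_le /eqP count_n.
have : count (fun y => y < n.+1) W = size W by apply/eqP; rewrite -all_count.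
by rewrite count_ltS size_W; lia.
Qed.

Lemma std_rec_max pre x s : pre ++ x :: s = W ->
  (count (fun y => y < x) W + count_mem x pre + 1 == n) = (x == n).
Proof.
move=> Ew; case/and3P: W_max => /eqP size_W _ /eqP count_n.
have x_le : x <= n by apply: unique_max_le W_max _; rewrite -Ew mem_cat mem_head orbT.
have count_x : count_mem x pre < count_mem x W by rewrite -Ew count_cat /= eqxx /=; lia.
have [x_n | x_ne] := eqVneq x n.
  subst x; have n_gt0 : 0 < n by rewrite -size_W -Ew size_cat /=; lia.
  by rewrite count_lt_max; move: count_n; rewrite -Ew count_cat /= eqxx /=; lia.
have : count (fun y => y < x.+1) W <= count (fun y => y < n) W.
  by apply: sub_count => y /=; lia.
by rewrite count_ltS count_lt_max; move: count_n; rewrite -size_W; lia.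
Qed.

Lemma std_word_mask_max : map (predC1 n) (std_word W) = map (predC1 n) W.
Proof.
suff gen s pre : pre ++ s = W -> map (predC1 n) (std_rec W pre s) = map (predC1 n) s.
  by rewrite std_wordE gen.
elim: s pre => // x s IH pre Ew /=.
by rewrite (std_rec_max Ew) IH // cat_rcons.
Qed.

Lemma std_word_filter_max :
  filter (predC1 n) (std_word W) = std_word (filter (predC1 n) W).
Proof.
suff gen s pre : pre ++ s = W -> filter (predC1 n) (std_rec W pre s) =
    std_rec (filter (predC1 n) W) (filter (predC1 n) pre) (filter (predC1 n) s).
  by rewrite !std_wordE gen.
elim: s pre => // x s IH pre Ew /=.
rewrite (std_rec_max Ew) IH ?cat_rcons // filter_rcons.
have [-> | x_ne] := eqVneq x n; first by rewrite /= eqxx.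
have x_le : x <= n by apply: unique_max_le W_max _; rewrite -Ew mem_cat mem_head orbT.
rewrite /= x_ne !count_filter; congr (_ + _ + _ :: _); apply: eq_count => y /=.
  by case: ltnP => // y_lt; apply/eqP; lia.
by case: eqP => // ->.
Qed.

End StandardizeMax.

Lemma eq_by_mask_filter (T : eqType) (z : T) (u v : seq T) :
  map (predC1 z) u = map (predC1 z) v -> filter (predC1 z) u = filter (predC1 z) v -> u = v.
Proof.
elim: u v => [|x u IH] [|y v] //= [+ /IH {}IH].
have [-> | x_z] := eqVneq x z; have [-> | y_z] := eqVneq y z => //= _.
- by move/IH ->.
- by case=> -> /IH ->.
Qed.

Section LetterwiseMapFixingMax.

Variables (n : nat) (g : nat -> nat).
Hypothesis g_max : forall x, x <= n -> g x <= n /\ (g x == n) = (x == n).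

Lemma map_unique_max u : unique_max n u -> unique_max n (map g u).
Proof.
case/and3P=> size_u /allP le_n /eqP count_n; rewrite /unique_max size_map size_u count_map /=.
apply/andP; split; first by apply/allP => _ /mapP [x /le_n /g_max [? _] ->].
by rewrite -count_n; apply/eqP/eq_in_count => x /le_n /g_max [_ /= ->].
Qed.

Lemma map_mask_max u : unique_max n u -> map (predC1 n) (map g u) = map (predC1 n) u.
Proof.
move=> u_max; rewrite -map_comp; apply/eq_in_map => x /(unique_max_le u_max) /g_max [_].
by rewrite /= => ->.
Qed.

Lemma map_filter_max u : unique_max n u ->
  filter (predC1 n) (map g u) = map g (filter (predC1 n) u).
Proof.
move=> u_max; rewrite filter_map; congr map; apply/eq_in_filter => x.
by move/(unique_max_le u_max)/g_max => [_ /= ->].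
Qed.

End LetterwiseMapFixingMax.

Lemma f_word_max n i u w : i.+1 < n -> unique_max n u -> f_word i u = Some w ->
  unique_max n w /\ map (predC1 n) w = map (predC1 n) u.
Proof.
move=> lt_n u_max /f_word_raise [pre [post [u_eq ->]]]; move: u_max; rewrite u_eq.
have [i_n i1_n] : (i == n) = false /\ (i.+1 == n) = false by split; apply/eqP; lia.
rewrite /unique_max !size_cat !all_cat !count_cat !map_cat /= i_n i1_n (ltnW lt_n).
by case/and3P=> -> /and3P [-> _ ->] ->.
Qed.

Definition collapse_letter (i m x : nat) : nat :=
  if i <= x <= i + m then i else if i + m < x <= i + 2 * m then i.+1 else x.

Lemma collapse_letter_max n i m : i + 2 * m < n -> forall x, x <= n ->
  collapse_letter i m x <= n /\ (collapse_letter i m x == n) = (x == n).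
Proof.
move=> lt_n x le_n; rewrite /collapse_letter.
case: ifP => [/andP [_ x_le] | _]; last case: ifP => [/andP [x_gt x_le] | _] //.
  by split; rewrite ?ltn_eqF //; lia.
by split; rewrite ?ltn_eqF //; lia.
Qed.

Lemma size_filter_max n u : unique_max n u -> size (filter (predC1 n) u) = n.-1.
Proof.
case/and3P=> /eqP size_u _ /eqP count_n.
have := count_predC (pred1 n) u; rewrite size_filter count_n size_u.
by rewrite (@eq_count _ (predC1 n) (predC (pred1 n))) //; lia.
Qed.

Lemma dyck_interval_filter_max n u i m : unique_max n u ->
  dyck_interval (filter (predC1 n) u) i m = dyck_interval u i m && (i + 2 * m < n).
Proof.
move=> u_max; have size_u : size u = n by case/and3P: u_max => /eqP.
rewrite /dyck_interval size_filter_max // size_u -filter_predI.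
have [lt_n | ge_n] := ltnP (i + 2 * m) n.
  have [-> ->] : (i + 2 * m <= n.-1) /\ (i + 2 * m <= n) by lia.
  rewrite andbT (@eq_filter _ _ (fun x => i <= x <= i + 2 * m)) // => x /=.
  by case: (leqP x (i + 2 * m)) => [le_x | _]; rewrite ?andbF // andbT; apply/eqP; lia.
by rewrite andbF; apply/negbTE/and4P => [[? _ ? _]]; lia.
Qed.

Lemma f_word_collapse_filter_max n i m u : 0 < m -> i + 2 * m < n -> unique_max n u ->
  f_word i (map (collapse_letter i m) (filter (predC1 n) u)) =
  omap (filter (predC1 n)) (f_word i (map (collapse_letter i m) u)).
Proof.
move=> m_gt0 lt_n u_max.
by rewrite -(map_filter_max (collapse_letter_max lt_n)) // f_word_filter //=; apply/eqP; lia.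
Qed.

Definition word_edge (i m : nat) (u v : seq nat) : Prop :=
  dyck_interval u i m /\
  exists2 w, f_word i (map (collapse_letter i m) u) = Some w & v = std_word w.

Lemma word_edge_filter_max n i m u v : unique_max n u -> unique_max n v ->
  (word_edge i m u v /\ ~ (i <= n <= i + 2 * m)) <->
  (map (predC1 n) u = map (predC1 n) v /\
   word_edge i m (filter (predC1 n) u) (filter (predC1 n) v)).
Proof.
move=> u_max v_max; have size_u : size u = n by case/and3P: u_max => /eqP.
have collapse_max lt_n := map_unique_max (collapse_letter_max (i := i) (m := m) lt_n) u_max.
have collapse_mask lt_n := map_mask_max (collapse_letter_max (i := i) (m := m) lt_n) u_max.
split=> [[[dyck_u [w fw ->]] n_out] | [mask_uv [dyck_fu [w0 + fv]]]].
  have [m_gt0 _ + _] := and4P dyck_u; rewrite size_u => le_n.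
  have lt_n : i + 2 * m < n by lia.
  have [w_max mask_w] := f_word_max (ltac:(lia) : i.+1 < n) (collapse_max lt_n) fw.
  split; first by rewrite std_word_mask_max // mask_w collapse_mask.
  split; first by rewrite dyck_interval_filter_max // dyck_u lt_n.
  exists (filter (predC1 n) w); first by rewrite f_word_collapse_filter_max // fw.
  by rewrite std_word_filter_max.
have /andP [dyck_u lt_n] : dyck_interval u i m && (i + 2 * m < n).
  by rewrite -dyck_interval_filter_max.
have /and4P [m_gt0 _ _ _] := dyck_u.
rewrite f_word_collapse_filter_max //; case fw: f_word => [w|] //= [w0_eq].
have [w_max mask_w] := f_word_max (ltac:(lia) : i.+1 < n) (collapse_max lt_n) fw.
split; last by lia.
split=> //; exists w => //; apply: (@eq_by_mask_filter _ n).
  by rewrite std_word_mask_max // mask_w collapse_mask.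
by rewrite fv -w0_eq std_word_filter_max.
Qed.

Lemma rowword_of_rowword sh w : sumn sh = size w -> rowword (of_rowword sh w) = w.
Proof. by move=> sh_w; rewrite /rowword /of_rowword revK reshapeKr // sumn_rev sh_w. Qed.

Lemma of_rowwordK T : of_rowword (shape T) (rowword T) = T.
Proof. by rewrite /of_rowword /rowword -map_rev flattenK revK. Qed.

Lemma size_rowword T : size (rowword T) = sumn (shape T).
Proof. by rewrite /rowword size_flatten /seq.shape map_rev sumn_rev. Qed.

Lemma rowword_map (A : Type) (f : nat -> A) (T : tableau) :
  map f (rowword T) = flatten (rev (map (map f) T)).
Proof. by rewrite /rowword -map_rev; elim: (rev T) => //= row T' <-; rewrite map_cat. Qed.

Lemma map_rows_rowword (A : Type) (f : nat -> A) (T : tableau) :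
  map (map f) T = rev (reshape (rev (shape T)) (map f (rowword T))).
Proof.
rewrite rowword_map; have -> : rev (shape T) = seq.shape (rev (map (map f) T)).
  by rewrite /seq.shape -!map_rev -map_comp; apply: eq_map => row /=; rewrite size_map.
by rewrite flattenK revK.
Qed.

Lemma std_of_rowword sh w : sumn sh = size w ->
  std (of_rowword sh w) = of_rowword sh (std_word w).
Proof.
move=> sh_w; rewrite /std rowword_of_rowword //; congr of_rowword.
by rewrite /of_rowword /shape map_rev -/(seq.shape _) reshapeKl ?revK // sumn_rev sh_w.
Qed.

Lemma rowword_collapse i m T : rowword (collapse i m T) = map (collapse_letter i m) (rowword T).
Proof. by rewrite rowword_map. Qed.

Lemma shape_collapse i m T : shape (collapse i m T) = shape T.
Proof. by rewrite /shape -map_comp; apply: eq_map => row /=; rewrite size_map. Qed.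

Lemma CS_edge_word lam T1 T2 i m : is_SYT lam T1 -> is_SYT lam T2 ->
  CS_edge lam T1 (i, m) T2 <-> word_edge i m (rowword T1) (rowword T2).
Proof.
move=> T1_SYT T2_SYT; have [sh1 _ _ _] := T1_SYT; have [sh2 _ _ _] := T2_SYT.
rewrite /CS_edge /word_edge /f_tab rowword_collapse shape_collapse sh1.
have size1 : sumn lam = size (map (collapse_letter i m) (rowword T1)).
  by rewrite size_map size_rowword sh1.
split=> [[_ _ dyck [b' []]] | [dyck [w fw T2w]]].
  case fw: f_word => [w|] //= [<-] ->; split=> //; exists w => //.
  have size_w : sumn lam = size w by rewrite (size_f_word fw).
  by rewrite std_of_rowword // rowword_of_rowword // size_std_word.
have size_w : sumn lam = size w by rewrite (size_f_word fw).
split=> //; exists (of_rowword lam w); rewrite fw; split=> //.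
by rewrite std_of_rowword // -T2w -sh2 of_rowwordK.
Qed.

Lemma mem_nth_flatten (A : eqType) (T : seq (seq A)) k x :
  x \in nth [::] T k -> x \in flatten T.
Proof.
case: (ltnP k (size T)) => [lt_k x_in | ?]; last by rewrite nth_default.
by apply/flattenP; exists (nth [::] T k); rewrite ?mem_nth.
Qed.

Lemma sorted_rcons_ltn (s : seq nat) x :
  sorted ltn (rcons s x) = sorted ltn s && all (ltn^~ x) s.
Proof.
have gtn_trans : transitive (fun a b : nat => b < a) by move=> ? ? ? /=; lia.
by rewrite -rev_sorted rev_rcons /= (path_sortedE gtn_trans) all_rev rev_sorted andbC.
Qed.

Lemma sorted_ltn_max (s : seq nat) x : sorted ltn s -> x \in s -> all (leq^~ x) s ->
  s = rcons [seq y <- s | y != x] x.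
Proof.
case/lastP: s => // s y; rewrite sorted_rcons_ltn mem_rcons inE all_rcons.
move=> /andP [_ lt_y] /orP [/eqP x_y | x_s] /andP [y_le le_x].
  subst y; rewrite filter_rcons eqxx /=; congr rcons; apply/esym/all_filterP.
  by apply: sub_all lt_y => z /=; rewrite neq_ltn => ->.
by have /= := allP lt_y x x_s; lia.
Qed.

Lemma uniq_flatten_nth (A : eqType) (T : seq (seq A)) x k1 k2 : uniq (flatten T) ->
  x \in nth [::] T k1 -> x \in nth [::] T k2 -> k1 = k2.
Proof.
elim: T k1 k2 => [|row T IH] [|k1] [|k2] //=; rewrite cat_uniq => /and3P [_ disj uniq_T].
- by move=> x_row /mem_nth_flatten x_T; case/hasP: disj; exists x.
- by move=> /mem_nth_flatten x_T x_row; case/hasP: disj; exists x.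
by move=> x1 x2; rewrite (IH k1 k2).
Qed.

Lemma nth_filter_neq_suffix (A : eqType) (x0 : A) (X : seq A) :
  (forall k, nth x0 X k = x0 -> nth x0 X k.+1 = x0) ->
  forall k, nth x0 [seq x <- X | x != x0] k = nth x0 X k.
Proof.
elim: X => [|a X IH] //= suffix; have {}IH := IH (fun k => suffix k.+1).
have [a_x0 | _] := eqVneq a x0; last by case=> [|k] /=; rewrite ?IH.
have all_x0 k : nth x0 X k = x0 by elim: k => [|k]; [apply: (suffix 0) | apply: (suffix k.+1)].
by case=> [|k] /=; rewrite IH all_x0.
Qed.

Lemma map_set_nth (A B : Type) (f : A -> B) (x0 : A) s i y :
  map f (set_nth x0 s i y) = set_nth (f x0) (map f s) i (f y).
Proof. by elim: s i => [|a s IH] [|i] //=; rewrite ?IH //; elim: i => //= i ->. Qed.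

Lemma filter_set_nth_nth (A : eqType) (x0 : A) s i :
  [seq y <- set_nth x0 s i (nth x0 s i) | y != x0] = [seq y <- s | y != x0].
Proof.
elim: s i => [|a s IH] [|i] /=; rewrite ?IH ?eqxx //.
by elim: i => /= [|i ->]; rewrite eqxx.
Qed.

Lemma flatten_filter_nonempty (A : eqType) (X : seq (seq A)) :
  flatten [seq row <- X | row != [::]] = flatten X.
Proof. by elim: X => [|[|a row] X IH] //=; rewrite IH. Qed.

Lemma filter_predC1_iota m : filter (predC1 m) (iota 1 m) = iota 1 m.-1.
Proof.
case: m => // m; have -> : iota 1 m.+1 = rcons (iota 1 m) m.+1.
  by rewrite -cats1 -[m.+1]addn1 iotaD addnC.
rewrite filter_rcons /= eqxx /=.
by apply/all_filterP/allP => x; rewrite mem_iota /= => /andP [_]; rewrite add1n neq_ltn => ->.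
Qed.

Lemma size_nth_row (T : tableau) k : size (nth [::] T k) = nth 0 (shape T) k.
Proof. by rewrite -nth_shape. Qed.

Lemma part_pos lam k : is_part lam -> (k < size lam) = (0 < nth 0 lam k).
Proof.
case/andP=> _ /allP pos; case: ltnP => [k_lt | k_ge]; first by rewrite pos ?mem_nth.
by rewrite nth_default.
Qed.

Lemma part_nth_mono lam k k' : is_part lam -> k <= k' -> nth 0 lam k' <= nth 0 lam k.
Proof.
case/andP=> sorted_lam _ le_k.
have [lt_k' | ?] := ltnP k' (size lam); last by rewrite nth_default.
have geq_trans : transitive geq by move=> ? ? ? /=; lia.
by apply: (sorted_leq_nth geq_trans) => //; rewrite ?inE; [exact: leqnn | lia].
Qed.

Lemma eq_from_nth_pos (s t : seq nat) : all (fun x => 0 < x) s -> all (fun x => 0 < x) t ->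
  (forall k, nth 0 s k = nth 0 t k) -> s = t.
Proof.
elim: s t => [|x s IH] [|y t] //=; rewrite ?andbT.
- by move=> _ y_gt0 /(_ 0) /= y0; rewrite -y0 in y_gt0.
- by move=> /andP [x_gt0 _] _ /(_ 0) /= x0; rewrite x0 in x_gt0.
move=> /andP [_ s_pos] /andP [_ t_pos] st; have /= -> := st 0.
by rewrite (IH t) // => k; apply: (st k.+1).
Qed.

Lemma box_row_le_size lam mu r : is_part lam ->
  (forall k, nth 0 lam k = nth 0 mu k + (k == r)) -> r <= size mu.
Proof.
move=> lam_part lam_mu; rewrite leqNgt; apply/negP => lt_r.
have := part_nth_mono lam_part (ltnW lt_r); rewrite !lam_mu eqxx (ltn_eqF lt_r).
by rewrite !nth_default //; apply: ltnW.
Qed.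

Lemma box_row_unique (lam mu : seq nat) r1 r2 :
  (forall k, nth 0 lam k = nth 0 mu k + (k == r1)) ->
  (forall k, nth 0 lam k = nth 0 mu k + (k == r2)) -> r1 = r2.
Proof.
move=> lam_mu1 lam_mu2; apply/eqP; have := lam_mu2 r1; rewrite lam_mu1 eqxx.
by case: (r1 == r2) => //=; lia.
Qed.

Lemma sumn_le_nth (s t : seq nat) : size s <= size t ->
  (forall k, nth 0 s k <= nth 0 t k) -> sumn s <= sumn t.
Proof.
elim: t s => [|y t IH] [|x s] //= size_le le_st.
by rewrite leq_add ?(le_st 0) ?IH // => k; apply: (le_st k.+1).
Qed.

Lemma eq_nth_sumn (s t : seq nat) : size s = size t ->
  (forall k, nth 0 s k <= nth 0 t k) -> sumn t <= sumn s -> forall k, nth 0 s k = nth 0 t k.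
Proof.
elim: t s => [|y t IH] [|x s] //= [size_st] le_st le_sum.
have x_le : x <= y := le_st 0; have sum_le := sumn_le_nth (eq_leq size_st) (fun k => le_st k.+1).
have st k : nth 0 s k = nth 0 t k by apply: IH => // [k'|]; [apply: (le_st k'.+1) | lia].
by case=> [|k] /=; [lia | apply: st].
Qed.

Lemma box_row_of_sumn (lam mu : seq nat) : size mu = size lam ->
  (forall k, nth 0 mu k <= nth 0 lam k) -> (sumn mu).+1 = sumn lam ->
  exists r, forall k, nth 0 lam k = nth 0 mu k + (k == r).
Proof.
elim: lam mu => [|y lam IH] [|x mu] //= [size_mu] le_mu sum_mu.
have x_le : x <= y := le_mu 0; have le_tail k : nth 0 mu k <= nth 0 lam k := le_mu k.+1.
have [x_y | x_ne] := eqVneq x y.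
  have [r lam_mu] := IH mu size_mu le_tail ltac:(lia).
  by exists r.+1 => -[|k] //=; rewrite x_y addn0.
have sum_le := sumn_le_nth (eq_leq size_mu) le_tail.
have eq_tail := eq_nth_sumn size_mu le_tail ltac:(lia).
by exists 0 => -[|k] /=; [lia | rewrite eq_tail addn0].
Qed.

Lemma one_box_removed_row lam mu : one_box_removed lam mu ->
  exists r, forall k, nth 0 lam k = nth 0 mu k + (k == r).
Proof.
case=> _ sum_mu size_mu le_mu; pose mu' := mu ++ nseq (size lam - size mu) 0.
have nth_mu' k : nth 0 mu' k = nth 0 mu k.
  by rewrite nth_cat nth_nseq; case: ltnP => // ?; rewrite if_same nth_default.
have size_mu' : size mu' = size lam by rewrite size_cat size_nseq; lia.
have sum_mu' : (sumn mu').+1 = sumn lam by rewrite sumn_cat sumn_nseq; lia.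
have le_mu' k : nth 0 mu' k <= nth 0 lam k by rewrite nth_mu'.
have [r lam_mu'] := box_row_of_sumn size_mu' le_mu' sum_mu'.
by exists r => k; rewrite -nth_mu'.
Qed.

(** * Adding and removing the largest entry *)

Lemma mem_flatten_SYT lam T x : is_SYT lam T -> (x \in flatten T) = (0 < x <= sumn lam).
Proof. by case=> _ T_perm _ _; rewrite (perm_mem T_perm) mem_iota; lia. Qed.

Lemma perm_rowword_SYT lam T : is_SYT lam T -> perm_eq (rowword T) (iota 1 (sumn lam)).
Proof.
case=> _ T_perm _ _; apply: perm_trans T_perm.
by apply/permP => a; rewrite /rowword !count_flatten map_rev sumn_rev.
Qed.

Lemma unique_max_SYT lam T : 0 < sumn lam -> is_SYT lam T -> unique_max (sumn lam) (rowword T).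
Proof.
move=> n_gt0 /perm_rowword_SYT T_perm.
rewrite /unique_max (perm_size T_perm) size_iota eqxx (permP T_perm) count_uniq_mem ?iota_uniq //.
rewrite mem_iota n_gt0 add1n ltnSn /= andbT.
by apply/allP => x; rewrite (perm_mem T_perm) mem_iota add1n ltnS => /andP [].
Qed.

Lemma SYT_rows_nonempty mu S : is_part mu -> is_SYT mu S -> all (fun row => row != [::]) S.
Proof.
case/andP=> _ /allP mu_pos [S_shape _ _ _]; apply/allP => row row_in.
have := mu_pos (size row); rewrite -S_shape map_f // -size_eq0.
by case: (size row) => // /(_ isT).
Qed.

(* For [r = size S] this opens a new row. *)
Definition add_entry (A : Type) (x : A) (r : nat) (S : seq (seq A)) : seq (seq A) :=
  set_nth [::] S r (rcons (nth [::] S r) x).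

Lemma nth_add_entry (A : Type) (x : A) r S k :
  nth [::] (add_entry x r S) k = if k == r then rcons (nth [::] S r) x else nth [::] S k.
Proof. by rewrite nth_set_nth /=; case: eqP => // ->. Qed.

Lemma map_add_entry (A B : Type) (f : A -> B) x r S :
  map (map f) (add_entry x r S) = add_entry (f x) r (map (map f) S).
Proof.
rewrite /add_entry; elim: S r => [|row S IH] [|r] /=; rewrite ?map_rcons ?IH //.
by elim: r => //= r ->.
Qed.

Lemma perm_flatten_add_entry (A : eqType) (x : A) r S :
  perm_eq (flatten (add_entry x r S)) (x :: flatten S).
Proof.
rewrite /add_entry; elim: S r => [|row S IH] [|r] /=.
- by [].
- by elim: r.
- by rewrite -cats1 -catA perm_catCA.
by rewrite perm_sym -cat1s perm_catCA perm_cat2l perm_sym IH.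
Qed.

Definition remove_entry (x : nat) (T : tableau) : tableau :=
  [seq row <- map (filter (predC1 x)) T | row != [::]].

Lemma flatten_remove_entry x T : flatten (remove_entry x T) = filter (predC1 x) (flatten T).
Proof. by rewrite flatten_filter_nonempty filter_flatten. Qed.

Lemma rowword_remove_entry x T : rowword (remove_entry x T) = filter (predC1 x) (rowword T).
Proof. by rewrite /rowword -filter_rev flatten_filter_nonempty filter_flatten map_rev. Qed.

Lemma shape_remove_entry x T :
  shape (remove_entry x T) = [seq k <- map (count id) (map (map (predC1 x)) T) | k != 0].
Proof.
have -> : map (count id) (map (map (predC1 x)) T) = map size (map (filter (predC1 x)) T).
  by rewrite -!map_comp; apply: eq_map => row /=; rewrite count_map size_filter.
by rewrite /shape filter_map; congr map; apply: eq_filter => row /=; rewrite size_eq0.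
Qed.

Section AddLargestEntry.

Variables (lam mu : seq nat) (r : nat) (S : tableau).
Hypotheses (lam_part : is_part lam) (mu_part : is_part mu) (S_SYT : is_SYT mu S).
Hypothesis lam_mu : forall k, nth 0 lam k = nth 0 mu k + (k == r).

Lemma shape_add_entry x : shape (add_entry x r S) = lam.
Proof.
have [S_shape _ _ _] := S_SYT.
have r_le : r <= size S by rewrite -(size_map size S) [map _ _]S_shape (box_row_le_size lam_part).
apply: eq_from_nth_pos; last 2 first.
- by case/andP: lam_part.
- move=> k; rewrite -size_nth_row nth_add_entry lam_mu -S_shape -!size_nth_row.
  by case: eqP => [-> | _]; rewrite ?size_rcons ?addn1 ?addn0.
apply/(all_nthP 0) => k; rewrite size_map size_set_nth => k_lt.
rewrite -size_nth_row nth_add_entry; case: eqP => [_ | /eqP k_ne]; first by rewrite size_rcons.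
by rewrite size_nth_row S_shape -part_pos // -S_shape size_map; lia.
Qed.

Hypothesis sum_mu : (sumn mu).+1 = sumn lam.

Lemma add_entry_SYT : is_SYT lam (add_entry (sumn lam) r S).
Proof.
have [S_shape S_perm S_rows S_cols] := S_SYT.
have S_lt x : x \in flatten S -> x < sumn lam by rewrite (perm_mem S_perm) mem_iota; lia.
split.
- exact: shape_add_entry.
- apply: perm_trans (perm_flatten_add_entry _ _ _) _.
  have -> : iota 1 (sumn lam) = rcons (iota 1 (sumn mu)) (sumn lam).
    by rewrite -cats1 -sum_mu -[(sumn mu).+1]addn1 iotaD add1n addn1.
  by rewrite perm_sym perm_rcons perm_cons perm_sym.
- move=> k; rewrite nth_add_entry; case: eqP => // _.
  by rewrite sorted_rcons_ltn S_rows; apply/allP => x /mem_nth_flatten /S_lt.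
move=> k c; rewrite !nth_add_entry.
have [-> | k_ne] := eqVneq k r.
  rewrite gtn_eqF // => c_lt; rewrite nth_rcons ifT; first exact: S_cols.
  apply: leq_trans c_lt _; rewrite !size_nth_row S_shape; exact: part_nth_mono (leqnSn r).
have [k1_r | _] := eqVneq k.+1 r; last exact: S_cols.
rewrite size_rcons ltnS leq_eqVlt nth_rcons => /orP [/eqP -> | c_lt].
  rewrite ltnn eqxx; apply/S_lt/(mem_nth_flatten (k := k))/mem_nth.
  have := part_nth_mono lam_part (leqnSn k); rewrite !lam_mu k1_r eqxx (negbTE k_ne).
  by rewrite !size_nth_row S_shape; lia.
by rewrite c_lt -k1_r; apply: S_cols; rewrite k1_r.
Qed.

Lemma remove_add_entry : remove_entry (sumn lam) (add_entry (sumn lam) r S) = S.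
Proof.
have [_ S_perm _ _] := S_SYT.
have filter_row k : filter (predC1 (sumn lam)) (nth [::] S k) = nth [::] S k.
  apply/all_filterP/allP => x /mem_nth_flatten; rewrite (perm_mem S_perm) mem_iota /=.
  by case/andP=> _; rewrite add1n sum_mu => /ltn_eqF ->.
rewrite /remove_entry /add_entry map_set_nth filter_rcons /= eqxx /= filter_row.
have -> : map (filter (predC1 (sumn lam))) S = S.
  by rewrite -[RHS]map_id; apply/eq_in_map => _ /(nthP [::]) [k _ <-]; apply: filter_row.
by rewrite filter_set_nth_nth; apply/all_filterP/(SYT_rows_nonempty mu_part S_SYT).
Qed.

End AddLargestEntry.

Definition row_of (x : nat) (T : tableau) : nat := find (fun row => x \in row) T.

Section RemoveLargestEntry.

Variables (lam : seq nat) (T : tableau).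
Hypotheses (lam_part : is_part lam) (n_gt0 : 0 < sumn lam) (T_SYT : is_SYT lam T).

Local Notation n := (sumn lam).
Local Notation r := (row_of n T).
Local Notation R := [seq x <- nth [::] T r | x != n].
Local Notation mu := (shape (remove_entry n T)).

Lemma has_max_row : has (fun row => n \in row) T.
Proof.
have /flattenP [row row_in n_row] : n \in flatten T by rewrite (mem_flatten_SYT _ T_SYT) n_gt0 /=.
by apply/hasP; exists row.
Qed.

Lemma max_in_row_of : n \in nth [::] T r.
Proof. exact: (nth_find [::] has_max_row). Qed.

Lemma row_of_max_lt : r < size T.
Proof. by rewrite -has_find has_max_row. Qed.

Lemma row_of_max_rcons : nth [::] T r = rcons R n.
Proof.
have [_ _ T_rows _] := T_SYT; apply: sorted_ltn_max (T_rows r) max_in_row_of _.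
by apply/allP => x /mem_nth_flatten; rewrite (mem_flatten_SYT _ T_SYT) => /andP [].
Qed.

Lemma SYT_nth_nil k : nth [::] T k = [::] -> size T <= k.
Proof.
move=> row_k; rewrite leqNgt; apply/negP => lt_k.
by have /allP/(_ _ (mem_nth [::] lt_k)) := SYT_rows_nonempty lam_part T_SYT; rewrite row_k.
Qed.

Lemma map_filter_max_rows : map (filter (predC1 n)) T = set_nth [::] T r R.
Proof.
have [_ T_perm _ _] := T_SYT.
have uniq_T : uniq (flatten T) by rewrite (perm_uniq T_perm) iota_uniq.
apply: (@eq_from_nth _ [::]) => [|k].
  by rewrite size_map size_set_nth (maxn_idPr row_of_max_lt).
rewrite size_map => lt_k; rewrite (nth_map [::]) // nth_set_nth /=.
case: eqP => [-> // | /eqP k_ne].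
apply/all_filterP/allP => x x_in /=; apply: contra_neq k_ne => x_n.
by rewrite x_n in x_in; apply: uniq_flatten_nth uniq_T x_in max_in_row_of.
Qed.

Lemma size_row_above_max : size (nth [::] T r.+1) <= size R.
Proof.
have [_ _ _ T_cols] := T_SYT; rewrite leqNgt; apply/negP => lt_R.
have := T_cols r (size R) lt_R; rewrite {1}row_of_max_rcons nth_rcons ltnn eqxx.
have /mem_nth_flatten : nth 0 (nth [::] T r.+1) (size R) \in nth [::] T r.+1 by apply: mem_nth.
by rewrite (mem_flatten_SYT _ T_SYT); lia.
Qed.

Lemma nth_remove_entry k : nth [::] (remove_entry n T) k = if k == r then R else nth [::] T k.
Proof.
rewrite /remove_entry map_filter_max_rows nth_filter_neq_suffix ?nth_set_nth // => j.
rewrite !nth_set_nth /=; have [-> R_nil | j_ne /SYT_nth_nil le_j] := eqVneq j r.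
  by rewrite gtn_eqF //; apply: size0nil; have := size_row_above_max; rewrite R_nil /=; lia.
have r_lt := row_of_max_lt.
by rewrite ifN ?nth_default //; [lia | apply/eqP; lia].
Qed.

Lemma remove_entry_box_row k : nth 0 lam k = nth 0 mu k + (k == r).
Proof.
have [T_shape _ _ _] := T_SYT.
rewrite -[in LHS]T_shape -!size_nth_row nth_remove_entry.
case: eqP => [-> | _]; last by rewrite addn0.
by rewrite [in LHS]row_of_max_rcons size_rcons addn1.
Qed.

Lemma remove_entry_part : is_part mu.
Proof.
apply/andP; split; last first.
  by apply/allP => x /mapP [row]; rewrite mem_filter => /andP [row_ne _] ->; rewrite lt0n size_eq0.
apply/(sortedP 0) => k _ /=; have [-> | k_ne] := eqVneq k r.
  by rewrite -!size_nth_row !nth_remove_entry eqxx gtn_eqF //; apply: size_row_above_max.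
have := part_nth_mono lam_part (leqnSn k).
by rewrite !remove_entry_box_row (negbTE k_ne); case: (k.+1 == r) => /=; lia.
Qed.

Lemma sumn_remove_entry : sumn mu = n.-1.
Proof.
by rewrite -size_rowword rowword_remove_entry (size_filter_max (unique_max_SYT n_gt0 T_SYT)).
Qed.

Lemma remove_entry_one_box : one_box_removed lam mu.
Proof.
have [T_shape _ _ _] := T_SYT.
split; [exact: remove_entry_part | by rewrite sumn_remove_entry prednK | |].
  rewrite -[in X in _ <= X]T_shape /shape !size_map size_filter.
  by rewrite (leq_trans (count_size _ _)) ?size_map.
by move=> k; rewrite remove_entry_box_row leq_addr.
Qed.

Lemma nth_nth_remove_entry k c : c < size (nth [::] (remove_entry n T) k) ->
  nth 0 (nth [::] (remove_entry n T) k) c = nth 0 (nth [::] T k) c.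
Proof.
rewrite nth_remove_entry; case: eqP => [-> c_lt | //].
by rewrite [in RHS]row_of_max_rcons nth_rcons c_lt.
Qed.

Lemma remove_entry_SYT : is_SYT mu (remove_entry n T).
Proof.
have [T_shape T_perm T_rows T_cols] := T_SYT.
split=> // [|k|k c c_lt].
- by rewrite flatten_remove_entry sumn_remove_entry -filter_predC1_iota perm_filter.
- rewrite nth_remove_entry; case: eqP => // _.
  by apply: sorted_filter (T_rows r) => ? ? ? /=; apply: ltn_trans.
have c_lt_k : c < size (nth [::] (remove_entry n T) k).
  by apply: leq_trans c_lt _; rewrite !size_nth_row part_nth_mono // remove_entry_part.
rewrite !nth_nth_remove_entry //; apply: T_cols; apply: leq_trans c_lt _.
by rewrite !size_nth_row T_shape remove_entry_box_row leq_addr.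
Qed.

Lemma add_remove_entry : T = add_entry n r (remove_entry n T).
Proof.
have [T_shape _ _ _] := T_SYT.
have := shape_add_entry lam_part remove_entry_part remove_entry_SYT remove_entry_box_row n.
move=> /(congr1 size); rewrite !size_map -[in RHS]T_shape size_map => size_eq.
apply: (@eq_from_nth _ [::]) => // k _; rewrite nth_add_entry !nth_remove_entry eqxx.
by case: eqP => [-> | _] //; apply: row_of_max_rcons.
Qed.

End RemoveLargestEntry.

Lemma mask_rowword_add_entry x r S : x \notin flatten S ->
  map (predC1 x) (rowword (add_entry x r S)) =
  flatten (rev (add_entry false r (map (nseq^~ true) (shape S)))).
Proof.
move=> x_S; rewrite rowword_map map_add_entry /= eqxx /shape -map_comp.
congr (flatten (rev (add_entry _ _ _))); apply/eq_in_map => row row_S /=.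
rewrite -(size_map (predC1 x)); apply/all_pred1P/allP => _ /mapP [y y_row ->] /=.
by rewrite eqb_id; apply: contraNneq x_S => <-; apply/flattenP; exists row.
Qed.

Lemma remove_entry_shape_mask lam T1 T2 : is_part lam -> 0 < sumn lam ->
  is_SYT lam T1 -> is_SYT lam T2 ->
  shape (remove_entry (sumn lam) T1) = shape (remove_entry (sumn lam) T2) <->
  map (predC1 (sumn lam)) (rowword T1) = map (predC1 (sumn lam)) (rowword T2).
Proof.
move=> lam_part n_gt0 T1_SYT T2_SYT; split=> [mu_eq | mask_eq].
  have lam_mu1 := remove_entry_box_row lam_part n_gt0 T1_SYT.
  have lam_mu2 := remove_entry_box_row lam_part n_gt0 T2_SYT; rewrite -mu_eq in lam_mu2.
  rewrite (add_remove_entry lam_part n_gt0 T1_SYT) (add_remove_entry lam_part n_gt0 T2_SYT).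
  rewrite !mask_rowword_add_entry ?flatten_remove_entry ?mem_filter /= ?eqxx //.
  by rewrite mu_eq (box_row_unique lam_mu1 lam_mu2).
have [T1_shape _ _ _] := T1_SYT; have [T2_shape _ _ _] := T2_SYT.
by rewrite !shape_remove_entry !map_rows_rowword mask_eq T1_shape T2_shape.
Qed.

Lemma remove_entry_inj lam T1 T2 : is_part lam -> 0 < sumn lam ->
  is_SYT lam T1 -> is_SYT lam T2 -> remove_entry (sumn lam) T1 = remove_entry (sumn lam) T2 ->
  T1 = T2.
Proof.
move=> lam_part n_gt0 T1_SYT T2_SYT S_eq.
have lam_mu1 := remove_entry_box_row lam_part n_gt0 T1_SYT.
have lam_mu2 := remove_entry_box_row lam_part n_gt0 T2_SYT; rewrite -S_eq in lam_mu2.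
rewrite (add_remove_entry lam_part n_gt0 T1_SYT) (add_remove_entry lam_part n_gt0 T2_SYT) S_eq.
by rewrite (box_row_unique lam_mu1 lam_mu2).
Qed.

Lemma CS_edge_remove_entry lam T1 T2 i m : is_part lam -> 0 < sumn lam ->
  is_SYT lam T1 -> is_SYT lam T2 ->
  (CS_edge lam T1 (i, m) T2 /\ ~ (i <= sumn lam <= i + 2 * m)) <->
  (shape (remove_entry (sumn lam) T1) = shape (remove_entry (sumn lam) T2) /\
   CS_edge (shape (remove_entry (sumn lam) T1)) (remove_entry (sumn lam) T1) (i, m)
     (remove_entry (sumn lam) T2)).
Proof.
move=> lam_part n_gt0 T1_SYT T2_SYT.
have S1_SYT := remove_entry_SYT lam_part n_gt0 T1_SYT.
have S2_SYT : shape (remove_entry (sumn lam) T1) = shape (remove_entry (sumn lam) T2) ->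
    is_SYT (shape (remove_entry (sumn lam) T1)) (remove_entry (sumn lam) T2).
  by move=> ->; apply: remove_entry_SYT.
have mask_iff := remove_entry_shape_mask lam_part n_gt0 T1_SYT T2_SYT.
have := word_edge_filter_max i m (unique_max_SYT n_gt0 T1_SYT) (unique_max_SYT n_gt0 T2_SYT).
rewrite -!rowword_remove_entry => -[edge_filter filter_edge].
split=> [[/(CS_edge_word i m T1_SYT T2_SYT) edge n_out] | [mu_eq]].
  have [/mask_iff mu_eq edge'] := edge_filter (conj edge n_out).
  by split=> //; apply/(CS_edge_word i m S1_SYT (S2_SYT mu_eq)).
move/(CS_edge_word i m S1_SYT (S2_SYT mu_eq)) => edge.
have [edge' n_out] := filter_edge (conj (mask_iff.1 mu_eq) edge).
by split=> //; apply/(CS_edge_word i m T1_SYT T2_SYT).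
Qed.

Theorem theorem4p11 (n : nat) (lam : seq nat) :
  0 < n -> is_part lam -> sumn lam = n ->
  exists phi : tableau -> seq nat * tableau,
    [/\ (forall T, is_SYT lam T ->
           one_box_removed lam (phi T).1 /\ is_SYT (phi T).1 (phi T).2),
        (forall T1 T2, is_SYT lam T1 -> is_SYT lam T2 -> phi T1 = phi T2 -> T1 = T2),
        (forall mu S, one_box_removed lam mu -> is_SYT mu S ->
           exists2 T, is_SYT lam T & phi T = (mu, S)) &
        (forall T1 T2 i m, is_SYT lam T1 -> is_SYT lam T2 ->
           ((CS_edge lam T1 (i, m) T2 /\ ~ (i <= n <= i + 2 * m)) <->
            ((phi T1).1 = (phi T2).1 /\
             CS_edge (phi T1).1 (phi T1).2 (i, m) (phi T2).2)))].
Proof.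
move=> + lam_part sum_lam; rewrite -{}sum_lam => n_gt0.
exists (fun T => (shape (remove_entry (sumn lam) T), remove_entry (sumn lam) T)); split=> /=.
- by move=> T T_SYT; split; [apply: remove_entry_one_box | apply: remove_entry_SYT].
- by move=> T1 T2 T1_SYT T2_SYT [_]; apply: remove_entry_inj.
- move=> mu S one_box S_SYT; have [r lam_mu] := one_box_removed_row one_box.
  have [mu_part sum_mu _ _] := one_box; have [S_shape _ _ _] := S_SYT.
  exists (add_entry (sumn lam) r S).
    exact: add_entry_SYT lam_part mu_part S_SYT lam_mu sum_mu.
  by rewrite (remove_add_entry r mu_part S_SYT sum_mu) S_shape.
by move=> T1 T2 i m; apply: CS_edge_remove_entry.
Qed.
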